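(* For every $c>0$ and $\varepsilon>0$ there is $n_0$ such that for all $n>n_0$ the following holds. Let $\ell_1,\ell_2$ be lines in $\mathbb{R}^2$, let $P_1$ be a set of $n$ points on $\ell_1$ and $P_2$ a set of $n^{1/2+\varepsilon}$ points on $\ell_2$. If $|D(P_1,P_2)|<cn$, then $\ell_1$ and $\ell_2$ are parallel or orthogonal.
   Context: For point sets $P,Q\subset\mathbb{R}^2$, $D(P,Q)=\{d(p,q): p\in P,\ q\in Q\}$ denotes the set of Euclidean distances between a point of $P$ and a point of $Q$. *)

From Stdlib Require Import Reals Lra List.
Import ListNotations.
Open Scope R_scope.

Definition point : Type := (R * R)%type.

Definition dist2 (p q : point) : R :=
  sqrt ((fst p - fst q) ^ 2 + (snd p - snd q) ^ 2).

(* The line through a with direction d (d <> 0). *)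
Definition on_line (a d p : point) : Prop :=
  exists t : R, p = (fst a + t * fst d, snd a + t * snd d).

(* Finite point sets are duplicate-free lists. *)
Definition distset (P Q : list point) : list R :=
  nodup Req_EM_T (flat_map (fun p => map (dist2 p) Q) P).

Definition parallel (d1 d2 : point) : Prop :=
  fst d1 * snd d2 - snd d1 * fst d2 = 0.

Definition orthogonal (d1 d2 : point) : Prop :=
  fst d1 * fst d2 + snd d1 * snd d2 = 0.

(** Parametrise both lines from their intersection point. The squared distance between the
    points with parameters [s] and [t] is a positive definite form
    [F s t = A s^2 - 2 C s t + B t^2], and [C <> 0] because the lines are not orthogonal.
    By Cauchy-Schwarz, [(n m)^2 <= |D| E] where the energy [E] counts the solutions of
    [F s t = F s' t']. For fixed [(t, t')] with [t'^2 <> t^2] these solutions form a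
    hyperbola in the [(s, s')]-plane, made of at most four monotone pieces; cutting the grid
    into [r x r] cells, each hyperbola visits [O(n / r)] cells, and the rest of its points
    come in pairs sharing a cell, while two grid points lie on at most two such hyperbolas.
    So [E = O(n m + m^2 n / r + n^2 r^2)]; for a constant [r] of order [c] this contradicts
    [|D| < c n] as soon as [m >= n^(1/2 + eps)] and [n] is large. *)

From Stdlib Require Import Reals List Lra Lia Bool.
Import ListNotations.
Open Scope R_scope.

Fixpoint lsum {A} (f : A -> nat) (l : list A) : nat :=
  match l with [] => 0%nat | x :: l' => (f x + lsum f l')%nat end.

Definition decb {P Q : Prop} (d : {P} + {Q}) : bool := if d then true else false.

Lemma decb_true {P} (d : {P} + {~ P}) : decb d = true <-> P.
Proof. unfold decb; destruct d; split; intros; auto; try discriminate; contradiction. Qed.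

Lemma b2n_andb a b : Nat.b2n (a && b) = (Nat.b2n a * Nat.b2n b)%nat.
Proof. destruct a, b; reflexivity. Qed.

Lemma lsum_ext {A} (f g : A -> nat) l : (forall x, In x l -> f x = g x) -> lsum f l = lsum g l.
Proof. induction l; simpl; intros H; auto. Qed.

Lemma lsum_le {A} (f g : A -> nat) l :
  (forall x, In x l -> (f x <= g x)%nat) -> (lsum f l <= lsum g l)%nat.
Proof.
  induction l as [|a l IH]; simpl; intros H; auto.
  specialize (IH (fun x h => H x (or_intror h))). specialize (H a (or_introl eq_refl)). lia.
Qed.

Lemma lsum_eq0 {A} (f : A -> nat) l : (forall x, In x l -> f x = 0%nat) -> lsum f l = 0%nat.
Proof. induction l; simpl; intros H; auto. rewrite IHl, H; auto. Qed.

Lemma lsum_app {A} (f : A -> nat) l1 l2 : lsum f (l1 ++ l2) = (lsum f l1 + lsum f l2)%nat.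
Proof. induction l1; simpl; auto. rewrite IHl1; lia. Qed.

Lemma lsum_add {A} (f g : A -> nat) l : lsum (fun x => f x + g x)%nat l = (lsum f l + lsum g l)%nat.
Proof. induction l; simpl; auto. rewrite IHl; lia. Qed.

Lemma lsum_mul_l {A} (c : nat) (f : A -> nat) l : lsum (fun x => c * f x)%nat l = (c * lsum f l)%nat.
Proof. induction l; simpl; auto. rewrite IHl; lia. Qed.

Lemma lsum_const {A} (c : nat) (l : list A) : lsum (fun _ => c) l = (c * length l)%nat.
Proof. induction l; simpl; auto. rewrite IHl; lia. Qed.

Lemma lsum_in_le {A} (f : A -> nat) l y : In y l -> (f y <= lsum f l)%nat.
Proof.
  induction l; simpl; intros H; [contradiction|].
  destruct H as [->|H]; [lia|specialize (IHl H); lia].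
Qed.

Lemma lsum_comm {A B} (f : A -> B -> nat) l1 l2 :
  lsum (fun a => lsum (f a) l2) l1 = lsum (fun b => lsum (fun a => f a b) l1) l2.
Proof.
  induction l1; simpl.
  - induction l2; simpl; auto.
  - rewrite IHl1, <- lsum_add. reflexivity.
Qed.

Lemma lsum_map {A B} (f : B -> nat) (g : A -> B) l : lsum f (map g l) = lsum (fun x => f (g x)) l.
Proof. induction l; simpl; auto. Qed.

Lemma lsum_flat_map {A B} (f : B -> nat) (g : A -> list B) l :
  lsum f (flat_map g l) = lsum (fun x => lsum f (g x)) l.
Proof. induction l; simpl; auto. rewrite lsum_app, IHl; auto. Qed.

Lemma lsum_list_prod {A B} (f : A * B -> nat) l1 l2 :
  lsum f (list_prod l1 l2) = lsum (fun a => lsum (fun b => f (a, b)) l2) l1.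
Proof. induction l1; simpl; auto. rewrite lsum_app, IHl1, lsum_map; auto. Qed.

Lemma lsum_b2n {A} (p : A -> bool) l : lsum (fun x => Nat.b2n (p x)) l = length (filter p l).
Proof. induction l; simpl; auto. rewrite IHl. destruct (p a); simpl; lia. Qed.

Lemma lsum_filter {A} (f : A -> nat) (p : A -> bool) l :
  lsum f (filter p l) = lsum (fun x => Nat.b2n (p x) * f x)%nat l.
Proof. induction l; simpl; auto. destruct (p a); simpl; rewrite IHl; lia. Qed.

Lemma lsum_b2n_le_2 {A} (p : A -> bool) l : NoDup l ->
  (forall a b c, In a l -> In b l -> In c l -> p a = true -> p b = true -> p c = true ->
     a <> b -> a <> c -> b <> c -> False) ->
  (lsum (fun x => Nat.b2n (p x)) l <= 2)%nat.
Proof.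
  intros Hl H. rewrite lsum_b2n.
  assert (Hf : NoDup (filter p l)) by (apply NoDup_filter; auto).
  destruct (filter p l) as [|a [|b [|c r]]] eqn:E; simpl; try lia.
  exfalso.
  assert (Hin : forall x, In x (a :: b :: c :: r) -> In x l /\ p x = true)
    by (intros x Hx; rewrite <- E in Hx; apply filter_In; auto).
  destruct (Hin a) as [Ha Pa], (Hin b) as [Hb Pb], (Hin c) as [Hc Pc]; simpl; auto.
  inversion Hf as [|? ? Na Hf']; inversion Hf' as [|? ? Nb _]; subst.
  apply (H a b c); auto; intros ->; simpl in *; tauto.
Qed.

Lemma lsum_comm4 {A B} (f : A -> A -> B -> B -> nat) l1 l2 :
  lsum (fun a => lsum (fun a' => lsum (fun b => lsum (f a a' b) l2) l2) l1) l1 =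
  lsum (fun b => lsum (fun b' => lsum (fun a => lsum (fun a' => f a a' b b') l1) l1) l2) l2.
Proof.
  transitivity (lsum (fun a => lsum (fun b => lsum (fun a' => lsum (f a a' b) l2) l1) l2) l1).
  { apply lsum_ext; intros; apply lsum_comm. }
  rewrite lsum_comm. apply lsum_ext; intros b _.
  transitivity (lsum (fun a => lsum (fun b' => lsum (fun a' => f a a' b b') l1) l2) l1).
  { apply lsum_ext; intros; apply lsum_comm. }
  apply lsum_comm.
Qed.

Lemma NoDup_list_prod {A B} (l1 : list A) (l2 : list B) :
  NoDup l1 -> NoDup l2 -> NoDup (list_prod l1 l2).
Proof.
  induction 1 as [|a l1 Ha Hl1 IH]; simpl; intros H2; [constructor|].
  apply NoDup_app; auto.
  - apply NoDup_map_NoDup_ForallPairs; auto. intros x y _ _ E; injection E; auto.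
  - intros [x y] Hm Hm'. apply in_map_iff in Hm as [b [Eb _]]. injection Eb as <- <-.
    apply in_prod_iff in Hm' as [Hm' _]. contradiction.
Qed.

Lemma lsum_sq_le {A} (g : A -> nat) l :
  (lsum g l * lsum g l <= length l * lsum (fun x => g x * g x) l)%nat.
Proof.
  assert (Hcross : forall a l,
    (2 * a * lsum g l <= length l * (a * a) + lsum (fun x => g x * g x) l)%nat).
  { intros a l'. induction l' as [|b l' IH]; simpl; [lia|].
    assert ((2 * a * g b <= a * a + g b * g b)%nat).
    { destruct (Nat.le_ge_cases a (g b)) as [H|H];
        apply Nat.le_exists_sub in H as [d [-> _]]; nia. }
    nia. }
  induction l as [|b l IH]; simpl; [lia|].
  specialize (Hcross (g b) l). nia.
Qed.

Section Multiplicity.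
Variables (K : Type) (Kdec : forall x y : K, {x = y} + {x <> y}).

Definition mult (u : K) (L : list K) : nat := lsum (fun y => Nat.b2n (decb (Kdec u y))) L.

Lemma lsum_pick (h : K -> nat) U y : NoDup U -> In y U ->
  lsum (fun u => Nat.b2n (decb (Kdec u y)) * h u)%nat U = h y.
Proof.
  induction 1 as [|a U Ha HU IH]; simpl; [contradiction|]. intros [<-|Hy].
  - rewrite lsum_eq0.
    + unfold decb; destruct (Kdec a a); [simpl; lia|congruence].
    + intros x Hx. unfold decb; destruct (Kdec x a); [subst; contradiction|reflexivity].
  - rewrite IH; auto. unfold decb; destruct (Kdec a y); [subst; contradiction|simpl; lia].
Qed.

Lemma lsum_by_value (h : K -> nat) L :
  lsum h L = lsum (fun u => mult u L * h u)%nat (nodup Kdec L).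
Proof.
  transitivity (lsum (fun y => lsum (fun u => Nat.b2n (decb (Kdec u y)) * h u)%nat (nodup Kdec L)) L).
  - apply lsum_ext. intros y Hy. rewrite lsum_pick; auto.
    + apply NoDup_nodup.
    + apply nodup_In; auto.
  - rewrite lsum_comm. apply lsum_ext. intros u _. unfold mult.
    rewrite Nat.mul_comm, <- lsum_mul_l. apply lsum_ext; intros; lia.
Qed.

(** Cauchy-Schwarz over the distinct values of [L]. *)
Lemma sq_length_le_distinct_mul_energy L :
  (length L * length L <= length (nodup Kdec L) * lsum (fun y => mult y L) L)%nat.
Proof.
  assert (E : length L = lsum (fun u => mult u L) (nodup Kdec L)).
  { rewrite <- (Nat.mul_1_l (length L)), <- lsum_const, lsum_by_value.
    apply lsum_ext; intros; lia. }
  rewrite (lsum_by_value (fun y => mult y L)), E. apply lsum_sq_le.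
Qed.

End Multiplicity.

Section Keys.
Variables (P K : Type).
Variables (Pdec : forall x y : P, {x = y} + {x <> y}) (Kdec : forall x y : K, {x = y} + {x <> y}).
Variable key : P -> K.

Definition key_collisions (G : list P) : nat :=
  lsum (fun x => lsum (fun y => Nat.b2n (negb (decb (Pdec x y)) && decb (Kdec (key x) (key y)))) G) G.

Lemma length_le_keys_add_collisions G :
  NoDup G -> (length G <= length (nodup Kdec (map key G)) + key_collisions G)%nat.
Proof.
  unfold key_collisions.
  induction 1 as [|x G Hx HG IH]; simpl; [lia|].
  set (g := fun x0 y => Nat.b2n (negb (decb (Pdec x0 y)) && decb (Kdec (key x0) (key y)))).
  fold g in IH.
  assert (E : (lsum (fun x0 => lsum (g x0) G) G <= lsum (fun x0 => g x0 x + lsum (g x0) G) G)%nat)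
    by (apply lsum_le; intros; lia).
  destruct (in_dec Kdec (key x) (map key G)) as [Hi|Hi]; [|simpl; unfold g in *; lia].
  apply in_map_iff in Hi as [y [Ey Hy]].
  assert (g x y = 1%nat).
  { unfold g, decb. destruct (Pdec x y); [subst; contradiction|].
    destruct (Kdec (key x) (key y)); [reflexivity|congruence]. }
  pose proof (lsum_in_le (g x) G y Hy). unfold g in *. lia.
Qed.

Lemma length_le_key_range_add_collisions G Kall :
  NoDup G -> (forall x, In x G -> In (key x) Kall) ->
  (length G <= length Kall + key_collisions G)%nat.
Proof.
  intros HG HK. pose proof (length_le_keys_add_collisions G HG).
  assert (length (nodup Kdec (map key G)) <= length Kall)%nat.
  { apply NoDup_incl_length; [apply NoDup_nodup|]. intros z Hz. apply nodup_In in Hz.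
    apply in_map_iff in Hz as [x [<- Hx]]. auto. }
  lia.
Qed.

End Keys.

Lemma length_filter_le {A} (f g : A -> bool) l : (forall x, In x l -> f x = true -> g x = true) ->
  (length (filter f l) <= length (filter g l))%nat.
Proof.
  induction l as [|a l IH]; simpl; intros H; auto.
  specialize (IH (fun x h => H x (or_intror h))).
  destruct (f a) eqn:Ef; [rewrite (H a (or_introl eq_refl) Ef); simpl; lia|].
  destruct (g a); simpl; lia.
Qed.

Lemma length_filter_lt {A} (f g : A -> bool) l y : (forall x, In x l -> f x = true -> g x = true) ->
  In y l -> g y = true -> f y = false -> (length (filter f l) < length (filter g l))%nat.
Proof.
  induction l as [|a l IH]; simpl; intros H Hy Hg Hf; [contradiction|].
  pose proof (length_filter_le f g l (fun x h => H x (or_intror h))).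
  destruct Hy as [<-|Hy]; [rewrite Hf, Hg; simpl; lia|].
  specialize (IH (fun x h => H x (or_intror h)) Hy Hg Hf).
  destruct (f a) eqn:Ef; [rewrite (H a (or_introl eq_refl) Ef); simpl; lia|].
  destruct (g a); simpl; lia.
Qed.

Definition rank (S : list R) (x : R) : nat := length (filter (fun y => decb (Rlt_dec y x)) S).

(** [block S r] cuts the sorted list [S] into consecutive blocks of [r] elements. *)
Definition block (S : list R) (r : nat) (x : R) : nat := (rank S x / r)%nat.

Section Blocks.
Variables (S : list R) (r : nat).
Hypotheses (HS : NoDup S) (Hr : (0 < r)%nat).

Lemma rank_le x y : x <= y -> (rank S x <= rank S y)%nat.
Proof. intros H. apply length_filter_le. intros z _. rewrite !decb_true. lra. Qed.

Lemma rank_lt x y : In x S -> x < y -> (rank S x < rank S y)%nat.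
Proof.
  intros Hx H. apply (length_filter_lt _ _ _ x); auto.
  - intros z _. rewrite !decb_true. lra.
  - apply decb_true; auto.
  - unfold decb; destruct (Rlt_dec x x); auto; lra.
Qed.

Lemma rank_lt_length x : In x S -> (rank S x < length S)%nat.
Proof.
  intros Hx. unfold rank. rewrite <- (filter_true S) at 2.
  apply (length_filter_lt _ _ _ x); auto. unfold decb; destruct (Rlt_dec x x); auto; lra.
Qed.

Lemma block_le x y : x <= y -> (block S r x <= block S r y)%nat.
Proof. intros H. apply Nat.Div0.div_le_mono, rank_le; auto. Qed.

Lemma block_lt x : In x S -> (block S r x < length S / r + 1)%nat.
Proof.
  intros Hx. pose proof (rank_lt_length x Hx).
  assert (block S r x <= length S / r)%nat by (apply Nat.Div0.div_le_mono; lia). lia.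
Qed.

Lemma block_size b : (lsum (fun y => Nat.b2n (Nat.eqb (block S r y) b)) S <= r)%nat.
Proof.
  rewrite lsum_b2n, <- (length_map (rank S)).
  transitivity (length (seq (b * r) r)); [|rewrite length_seq; lia].
  apply NoDup_incl_length.
  - apply NoDup_map_NoDup_ForallPairs; [|apply NoDup_filter; auto].
    intros x y Hx Hy E. apply filter_In in Hx as [Hx _]. apply filter_In in Hy as [Hy _].
    destruct (Rtotal_order x y) as [H|[H|H]]; auto.
    + pose proof (rank_lt x y Hx H); lia.
    + pose proof (rank_lt y x Hy H); lia.
  - intros z Hz. apply in_map_iff in Hz as [y [<- Hy]]. apply filter_In in Hy as [_ Hb].
    apply Nat.eqb_eq in Hb. unfold block in Hb. apply in_seq.
    pose proof (Nat.div_mod_eq (rank S y) r). pose proof (Nat.mod_upper_bound (rank S y) r ltac:(lia)).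
    rewrite Hb in *. nia.
Qed.

End Blocks.

Lemma quadratic_no_three_roots a b c x y z : a <> 0 ->
  a*x^2 + b*x + c = 0 -> a*y^2 + b*y + c = 0 -> a*z^2 + b*z + c = 0 ->
  x <> y -> x <> z -> y <> z -> False.
Proof.
  intros Ha Hx Hy Hz Hxy Hxz Hyz.
  assert (E1 : (x - y) * (a*(x+y) + b) = 0) by nra.
  assert (E2 : (x - z) * (a*(x+z) + b) = 0) by nra.
  apply Rmult_integral in E1 as [E1|E1]; [lra|].
  apply Rmult_integral in E2 as [E2|E2]; [lra|].
  assert (E3 : a * (y - z) = 0) by lra.
  apply Rmult_integral in E3 as [E3|E3]; lra.
Qed.

(** The sign hypotheses put both points in the same quadrant of the hyperbola
    [X^2 - Y^2 = const], where [Y] is monotone in [X]. *)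
Lemma hyperbola_branch_monotone X Y X' Y' : X^2 - Y^2 = X'^2 - Y'^2 -> X <= X' ->
  (0 <= X <-> 0 <= X') -> (0 <= Y <-> 0 <= Y') ->
  ((0 <= X <-> 0 <= Y) -> Y <= Y') /\ (~ (0 <= X <-> 0 <= Y) -> Y' <= Y).
Proof.
  intros E H HX HY.
  destruct (Rle_dec 0 X), (Rle_dec 0 Y); split; intros Hs;
    solve [exfalso; tauto | assert (0 <= X' <-> 0 <= X) by tauto; assert (0 <= Y' <-> 0 <= Y) by tauto; nra].
Qed.

Definition qform (A B C s t : R) : R := A*s^2 - 2*C*s*t + B*t^2.

Section Conics.
Variables A B C : R.
Hypotheses (HA : 0 < A) (HB : 0 < B) (HC : C <> 0) (HD : 0 < A*B - C^2).
Let F := qform A B C.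

Lemma A_mul_qform x t : A * F x t = (A*x - C*t)^2 + (A*B - C^2)*t^2.
Proof. unfold F, qform. ring. Qed.

Lemma qform_eq_sq_diff x x' t t' : F x t = F x' t' ->
  (A*x - C*t)^2 - (A*x' - C*t')^2 = (A*B - C^2)*(t'^2 - t^2).
Proof. intros E. pose proof (A_mul_qform x t). pose proof (A_mul_qform x' t'). rewrite E in *. lra. Qed.

(** For fixed [(t,t')] the equation [F x t = F x' t'] is a conic in [(x,x')]; conversely, for
    fixed points [(x,x')] and [(y,y')] the curves through both are cut out by a line and a conic
    in [(t,t')], with the line asymptotic to the conic exactly when [(x-y)^2 = (x'-y')^2]. *)
Lemma curve_degenerate_of_asymptotic_chord x x' y y' t t' :
  (x, x') <> (y, y') -> (x - y)^2 = (x' - y')^2 ->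
  F x t = F x' t' -> F y t = F y' t' -> t'^2 = t^2.
Proof.
  intros Hp Ee Ex Ey.
  set (e := x - y) in *. set (e' := x' - y') in *.
  assert (Hs : e' = e \/ e' = - e).
  { assert (H : (e' - e) * (e' + e) = 0) by nra. apply Rmult_integral in H as [H|H]; lra. }
  assert (He : A * e <> 0).
  { apply Rmult_integral_contrapositive; split; [lra|]. intros H0. apply Hp.
    assert (e' = 0) by (destruct Hs; lra). unfold e, e' in *. f_equal; lra. }
  pose proof (qform_eq_sq_diff _ _ _ _ Ex) as Kx. pose proof (qform_eq_sq_diff _ _ _ _ Ey) as Ky.
  set (X := A*x - C*t) in *. set (Y := A*x' - C*t') in *.
  set (X' := A*y - C*t) in *. set (Y' := A*y' - C*t') in *.
  assert (DX : X - X' = A * e) by (unfold X, X', e; ring).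
  assert (DY : Y - Y' = A * e') by (unfold Y, Y', e'; ring).
  assert (Hq : X^2 = Y^2).
  { assert (E : (X - X') * (X + X') = (Y - Y') * (Y + Y')) by nra.
    rewrite DX, DY in E.
    destruct Hs as [Hs|Hs]; rewrite Hs in E.
    - assert (X + X' = Y + Y') by (apply (Rmult_eq_reg_l (A*e)); auto). nra.
    - assert (X + X' = - (Y + Y')) by (apply (Rmult_eq_reg_l (A*e)); auto; lra). nra. }
  assert (H : (A*B - C^2) * (t'^2 - t^2) = 0) by lra.
  apply Rmult_integral in H as [H|H]; lra.
Qed.

Lemma chord_relations x x' y y' ti ti' tj tj' :
  F x ti = F x' ti' -> F y ti = F y' ti' -> F x tj = F x' tj' -> F y tj = F y' tj' ->
  (x - y) * (ti - tj) = (x' - y') * (ti' - tj') /\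
  (ti - tj) * (B*(ti + tj) - 2*C*x) = (ti' - tj') * (B*(ti' + tj') - 2*C*x').
Proof.
  unfold F, qform. intros a1 a2 a3 a4. split; [|nra].
  assert (H : C * ((x - y) * (ti - tj) - (x' - y') * (ti' - tj')) = 0) by nra.
  apply Rmult_integral in H as [H|H]; lra.
Qed.

Lemma cross_multiply e e' d d' P Q : e*d = e'*d' -> d*P = d'*Q -> (d <> 0 \/ d' <> 0) ->
  e'*P = e*Q.
Proof.
  intros H1 H2 [H3|H3].
  - apply (Rmult_eq_reg_r d); auto.
    replace (e' * P * d) with (e' * (d * P)) by ring. rewrite H2.
    replace (e * Q * d) with (Q * (e * d)) by ring. rewrite H1. ring.
  - apply (Rmult_eq_reg_r d'); auto.
    replace (e * Q * d') with (e * (d' * Q)) by ring. rewrite <- H2.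
    replace (e' * P * d') with (P * (e' * d')) by ring. rewrite <- H1. ring.
Qed.

Lemma pair_neq_sub (a b c d : R) : (a, b) <> (c, d) -> a - c <> 0 \/ b - d <> 0.
Proof. intros H. destruct (Req_EM_T a c), (Req_EM_T b d); subst; [exfalso; auto| | |]; lra. Qed.

Lemma no_three_curves_through_chord x x' y y' t1 t1' t2 t2' t3 t3' :
  (x - y)^2 <> (x' - y')^2 ->
  F x t1 = F x' t1' -> F y t1 = F y' t1' ->
  F x t2 = F x' t2' -> F y t2 = F y' t2' ->
  F x t3 = F x' t3' -> F y t3 = F y' t3' ->
  (t1, t1') <> (t2, t2') -> (t1, t1') <> (t3, t3') -> (t2, t2') <> (t3, t3') -> False.
Proof.
  intros Ee X1 Y1 X2 Y2 X3 Y3 N12 N13 N23.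
  destruct (chord_relations _ _ _ _ _ _ _ _ X1 Y1 X2 Y2) as [L1 L2].
  destruct (chord_relations _ _ _ _ _ _ _ _ X1 Y1 X3 Y3) as [L3 L4].
  destruct (chord_relations _ _ _ _ _ _ _ _ X2 Y2 X3 Y3) as [L5 _].
  pose proof (cross_multiply _ _ _ _ _ _ L1 L2 (pair_neq_sub _ _ _ _ N12)) as M1.
  pose proof (cross_multiply _ _ _ _ _ _ L3 L4 (pair_neq_sub _ _ _ _ N13)) as M2.
  set (e := x - y) in *. set (e' := x' - y') in *.
  assert (M : B * (e' * (t2 - t3) - e * (t2' - t3')) = 0) by nra.
  apply Rmult_integral in M as [M|M]; [lra|].
  assert (D1 : (t2 - t3) * (e'^2 - e^2) = 0).
  { replace ((t2 - t3) * (e'^2 - e^2)) with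
      (e' * (e' * (t2 - t3) - e * (t2' - t3')) + e * (e' * (t2' - t3') - e * (t2 - t3))) by ring.
    rewrite M, L5. ring. }
  assert (D2 : (t2' - t3') * (e'^2 - e^2) = 0).
  { replace ((t2' - t3') * (e'^2 - e^2)) with
      (e' * (e' * (t2' - t3') - e * (t2 - t3)) + e * (e' * (t2 - t3) - e * (t2' - t3'))) by ring.
    rewrite M, <- L5. ring. }
  apply Rmult_integral in D1 as [D1|D1]; [|lra].
  apply Rmult_integral in D2 as [D2|D2]; [|lra].
  apply N23. f_equal; lra.
Qed.

Lemma two_points_on_two_curves x x' y y' t1 t1' t2 t2' t3 t3' :
  (x, x') <> (y, y') -> t1'^2 <> t1^2 ->
  F x t1 = F x' t1' -> F y t1 = F y' t1' ->
  F x t2 = F x' t2' -> F y t2 = F y' t2' ->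
  F x t3 = F x' t3' -> F y t3 = F y' t3' ->
  (t1, t1') <> (t2, t2') -> (t1, t1') <> (t3, t3') -> (t2, t2') <> (t3, t3') -> False.
Proof.
  intros Hp Nd X1 Y1 X2 Y2 X3 Y3 N12 N13 N23.
  destruct (Req_EM_T ((x - y)^2) ((x' - y')^2)) as [Ee|Ee].
  - exact (Nd (curve_degenerate_of_asymptotic_chord _ _ _ _ _ _ Hp Ee X1 Y1)).
  - exact (no_three_curves_through_chord _ _ _ _ _ _ _ _ _ _ Ee X1 Y1 X2 Y2 X3 Y3 N12 N13 N23).
Qed.

End Conics.

Definition point_dec (p q : R * R) : {p = q} + {p <> q}.
Proof. decide equality; apply Req_EM_T. Defined.

Definition key_dec (k k' : (nat * nat) * nat) : {k = k'} + {k <> k'}.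
Proof. decide equality; [apply Nat.eq_dec | decide equality; apply Nat.eq_dec]. Defined.

Section Energy.
Variables A B C : R.
Hypotheses (HA : 0 < A) (HB : 0 < B) (HC : C <> 0) (HD : 0 < A*B - C^2).
Let F := qform A B C.
Variables (S T : list R) (r : nat).
Hypotheses (HS : NoDup S) (HT : NoDup T) (Hr : (0 < r)%nat).

Definition grid : list (R * R) := list_prod S S.
Definition on_curve (t t' : R) (p : R * R) : bool := decb (Req_EM_T (F (fst p) t) (F (snd p) t')).
Definition curve_count (t t' : R) : nat := lsum (fun p => Nat.b2n (on_curve t t' p)) grid.
Definition energy : nat := lsum (fun t => lsum (curve_count t) T) T.
Definition degenerate (t t' : R) : bool := decb (Req_EM_T (t'^2) (t^2)).

Definition same_cell (p q : R * R) : bool :=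
  Nat.eqb (block S r (fst p)) (block S r (fst q)) && Nat.eqb (block S r (snd p)) (block S r (snd q)).

Definition branch (t x : R) : nat := if Rle_dec 0 (A*x - C*t) then 0%nat else 1%nat.

Definition nblocks : nat := (length S / r + 1)%nat.

(** Along a monotone piece of a curve, [block x + block x'] (increasing piece) or
    [block x - block x'] (decreasing piece) strictly increases from cell to cell. *)
Definition curve_key (t t' : R) (p : R * R) : (nat * nat) * nat :=
  let (x, x') := p in
  ((branch t x, branch t' x'),
   if Nat.eq_dec (branch t x) (branch t' x') then (block S r x + block S r x')%nat
   else (block S r x + (nblocks - 1 - block S r x'))%nat).

Lemma on_curve_true t t' p : on_curve t t' p = true -> F (fst p) t = F (snd p) t'.
Proof. apply decb_true. Qed.

Lemma branch_eq_iff t t' x y : branch t x = branch t' y <-> (0 <= A*x - C*t <-> 0 <= A*y - C*t').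
Proof.
  unfold branch. destruct (Rle_dec 0 (A*x - C*t)), (Rle_dec 0 (A*y - C*t'));
    split; intros E; try discriminate; tauto.
Qed.

Lemma curve_monotone t t' x x' y y' : F x t = F x' t' -> F y t = F y' t' -> x <= y ->
  branch t x = branch t y -> branch t' x' = branch t' y' ->
  (branch t x = branch t' x' -> x' <= y') /\ (branch t x <> branch t' x' -> y' <= x').
Proof.
  intros Ex Ey Hxy Q Q'. apply branch_eq_iff in Q, Q'.
  assert (E : (A*x - C*t)^2 - (A*x' - C*t')^2 = (A*y - C*t)^2 - (A*y' - C*t')^2).
  { rewrite (qform_eq_sq_diff A B C x x' t t' Ex), (qform_eq_sq_diff A B C y y' t t' Ey). reflexivity. }
  destruct (hyperbola_branch_monotone _ _ _ _ E ltac:(nra) Q Q') as [H1 H2].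
  rewrite branch_eq_iff. split; intros Hq; [specialize (H1 Hq) | specialize (H2 Hq)]; nra.
Qed.

Lemma same_key_same_blocks_le t t' x x' y y' : In x S -> In x' S -> In y S -> In y' S ->
  F x t = F x' t' -> F y t = F y' t' -> x <= y ->
  curve_key t t' (x, x') = curve_key t t' (y, y') ->
  block S r x = block S r y /\ block S r x' = block S r y'.
Proof.
  intros Hx Hx' Hy Hy' Ex Ey Hxy K. unfold curve_key in K. injection K as Q Q' Hsum.
  destruct (curve_monotone t t' x x' y y' Ex Ey Hxy Q Q') as [M1 M2].
  pose proof (block_le S r x y Hxy).
  pose proof (block_lt S r Hr x' Hx'). pose proof (block_lt S r Hr y' Hy').
  unfold nblocks in Hsum.
  destruct (Nat.eq_dec (branch t x) (branch t' x')) as [e|e];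
    destruct (Nat.eq_dec (branch t y) (branch t' y')) as [e'|e']; try congruence.
  - pose proof (block_le S r _ _ (M1 e)). lia.
  - pose proof (block_le S r _ _ (M2 e)). lia.
Qed.

Lemma same_key_same_cell t t' p q : In p grid -> In q grid ->
  on_curve t t' p = true -> on_curve t t' q = true ->
  curve_key t t' p = curve_key t t' q -> same_cell p q = true.
Proof.
  destruct p as [x x'], q as [y y']. unfold grid, same_cell. simpl.
  intros Hp Hq Cp Cq K.
  apply in_prod_iff in Hp as [Hx Hx']. apply in_prod_iff in Hq as [Hy Hy'].
  apply on_curve_true in Cp, Cq.
  destruct (Rle_dec x y) as [Hxy|Hxy].
  - destruct (same_key_same_blocks_le t t' x x' y y') as [-> ->]; auto.
    rewrite !Nat.eqb_refl. reflexivity.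
  - destruct (same_key_same_blocks_le t t' y y' x x') as [-> ->]; auto; [lra|].
    rewrite !Nat.eqb_refl. reflexivity.
Qed.

Definition cell_pairs (t t' : R) : nat :=
  lsum (fun p => lsum (fun q => Nat.b2n (on_curve t t' p && on_curve t t' q
    && negb (decb (point_dec p q)) && same_cell p q)) grid) grid.

Lemma curve_count_le_cells t t' : (curve_count t t' <= 8 * nblocks + cell_pairs t t')%nat.
Proof.
  unfold curve_count. rewrite lsum_b2n.
  set (G := filter (on_curve t t') grid).
  set (keys := list_prod (list_prod [0%nat; 1%nat] [0%nat; 1%nat]) (seq 0 (2 * nblocks))).
  assert (HG : NoDup G) by (apply NoDup_filter, NoDup_list_prod; auto).
  assert (HK : forall p, In p G -> In (curve_key t t' p) keys).
  { intros [x x'] Hp. apply filter_In in Hp as [Hp _]. unfold grid in Hp.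
    apply in_prod_iff in Hp as [Hx Hx']. unfold curve_key, keys.
    apply in_prod_iff; split.
    - apply in_prod_iff; split; unfold branch; destruct Rle_dec; simpl; auto.
    - apply in_seq. pose proof (block_lt S r Hr x Hx). pose proof (block_lt S r Hr x' Hx').
      unfold nblocks. destruct Nat.eq_dec; lia. }
  pose proof (length_le_key_range_add_collisions _ _ point_dec key_dec (curve_key t t') G keys HG HK)
    as KB.
  assert (Hkeys : length keys = (8 * nblocks)%nat)
    by (unfold keys; rewrite !length_prod, length_seq; simpl; lia).
  rewrite Hkeys in KB. eapply Nat.le_trans; [apply KB|]. apply Nat.add_le_mono_l.
  unfold key_collisions, G, cell_pairs. rewrite lsum_filter. apply lsum_le. intros p Hp.
  rewrite lsum_filter. destruct (on_curve t t' p) eqn:Cp; simpl; [|lia].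
  rewrite Nat.add_0_r. apply lsum_le. intros q Hq.
  destruct (on_curve t t' q) eqn:Cq; simpl; [|lia].
  destruct (point_dec p q); simpl; [lia|].
  unfold decb at 1. destruct (key_dec (curve_key t t' p) (curve_key t t' q)) as [e|e]; simpl; [|lia].
  rewrite (same_key_same_cell t t' p q Hp Hq Cp Cq e). simpl. lia.
Qed.

Lemma curve_count_le_length t t' : (curve_count t t' <= 2 * length S)%nat.
Proof.
  unfold curve_count, grid. rewrite lsum_list_prod, <- lsum_const.
  apply lsum_le. intros s _. apply lsum_b2n_le_2; auto.
  intros a b c _ _ _ Ca Cb Cc Nab Nac Nbc.
  apply on_curve_true in Ca, Cb, Cc. simpl in *. unfold F, qform in *.
  apply (quadratic_no_three_roots A (-2*C*t') (B*t'^2 - (A*s^2 - 2*C*s*t + B*t^2)) a b c); auto; lra.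
Qed.

Lemma degenerate_partners_le_2 t : (lsum (fun t' => Nat.b2n (degenerate t t')) T <= 2)%nat.
Proof.
  apply lsum_b2n_le_2; auto. intros a b c _ _ _ Ca Cb Cc Nab Nac Nbc.
  unfold degenerate in Ca, Cb, Cc. apply decb_true in Ca, Cb, Cc.
  apply (quadratic_no_three_roots 1 0 (-(t^2)) a b c); auto; lra.
Qed.

Lemma curves_through_two_points_le_2 p q : p <> q ->
  (lsum (fun t => lsum (fun t' =>
     Nat.b2n (negb (degenerate t t') && on_curve t t' p && on_curve t t' q)) T) T <= 2)%nat.
Proof.
  intros Hpq.
  rewrite <- (lsum_list_prod (fun u => Nat.b2n (negb (degenerate (fst u) (snd u))
    && on_curve (fst u) (snd u) p && on_curve (fst u) (snd u) q))).
  apply lsum_b2n_le_2; [apply NoDup_list_prod; auto|].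
  intros [t1 t1'] [t2 t2'] [t3 t3'] _ _ _ G1 G2 G3 N12 N13 N23. simpl in *.
  apply andb_prop in G1 as [G1 G1q], G2 as [G2 G2q], G3 as [G3 G3q].
  apply andb_prop in G1 as [D1 G1p], G2 as [_ G2p], G3 as [_ G3p].
  apply on_curve_true in G1p, G1q, G2p, G2q, G3p, G3q.
  destruct p as [x x'], q as [y y']. simpl in *.
  apply (two_points_on_two_curves A B C HA HB HC HD x x' y y' t1 t1' t2 t2' t3 t3'); auto.
  intros E. unfold degenerate, decb in D1. destruct Req_EM_T; easy.
Qed.

Lemma same_cell_count_le p : (lsum (fun q => Nat.b2n (same_cell p q)) grid <= r * r)%nat.
Proof.
  unfold grid, same_cell. rewrite lsum_list_prod.
  eapply Nat.le_trans; [|apply Nat.mul_le_mono_r, (block_size S r HS Hr (block S r (fst p)))].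
  rewrite Nat.mul_comm, <- lsum_mul_l. apply lsum_le. intros a _. simpl.
  rewrite (lsum_ext _ (fun b => Nat.b2n (Nat.eqb (block S r a) (block S r (fst p)))
                               * Nat.b2n (Nat.eqb (block S r b) (block S r (snd p))))%nat).
  2:{ intros b _. rewrite b2n_andb, (Nat.eqb_sym (block S r (fst p))), (Nat.eqb_sym (block S r (snd p))).
      reflexivity. }
  rewrite lsum_mul_l. pose proof (block_size S r HS Hr (block S r (snd p))). nia.
Qed.

Lemma degenerate_energy_le :
  (lsum (fun t => lsum (fun t' => Nat.b2n (degenerate t t') * curve_count t t') T) T
     <= 4 * length S * length T)%nat.
Proof.
  transitivity (lsum (fun _ => 4 * length S)%nat T); [|rewrite lsum_const; lia].
  apply lsum_le. intros t _.
  transitivity (lsum (fun t' => 2 * length S * Nat.b2n (degenerate t t'))%nat T).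
  - apply lsum_le. intros t' _. pose proof (curve_count_le_length t t').
    destruct (degenerate t t'); simpl; lia.
  - rewrite lsum_mul_l. pose proof (degenerate_partners_le_2 t). nia.
Qed.

Lemma cell_pair_incidences_le p q :
  (lsum (fun t => lsum (fun t' => Nat.b2n (negb (degenerate t t') && on_curve t t' p
     && on_curve t t' q && negb (decb (point_dec p q)) && same_cell p q)) T) T
   <= 2 * Nat.b2n (same_cell p q))%nat.
Proof.
  destruct (point_dec p q) as [e|e], (same_cell p q) eqn:Ec; simpl;
    try (rewrite lsum_eq0; [lia|]; intros t _; apply lsum_eq0; intros t' _;
         rewrite ?andb_false_r; reflexivity).
  eapply Nat.le_trans; [|apply (curves_through_two_points_le_2 p q e)].
  apply lsum_le; intros t _; apply lsum_le; intros t' _. rewrite !andb_true_r. lia.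
Qed.

Lemma nondegenerate_energy_le :
  (lsum (fun t => lsum (fun t' => Nat.b2n (negb (degenerate t t')) * curve_count t t') T) T
     <= 8 * nblocks * (length T * length T) + 2 * (length S * length S * (r * r)))%nat.
Proof.
  set (inc := fun t t' p q => Nat.b2n (negb (degenerate t t') && on_curve t t' p
     && on_curve t t' q && negb (decb (point_dec p q)) && same_cell p q)).
  transitivity (lsum (fun t => lsum (fun t' => 8 * nblocks
     + lsum (fun p => lsum (inc t t' p) grid) grid) T) T)%nat.
  { apply lsum_le; intros t _; apply lsum_le; intros t' _.
    pose proof (curve_count_le_cells t t') as Hc. unfold cell_pairs in Hc.
    unfold inc. destruct (degenerate t t'); simpl; lia. }
  rewrite (lsum_ext _ (fun t => lsum (fun _ => 8 * nblocks) T
     + lsum (fun t' => lsum (fun p => lsum (inc t t' p) grid) grid) T)%nat)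
    by (intros; apply lsum_add).
  rewrite lsum_add, lsum_comm4.
  apply Nat.add_le_mono.
  { rewrite (lsum_ext _ (fun _ => 8 * nblocks * length T)%nat) by (intros; apply lsum_const).
    rewrite lsum_const. nia. }
  transitivity (lsum (fun p => 2 * (r * r)) grid)%nat.
  - apply lsum_le; intros p _.
    transitivity (lsum (fun q => 2 * Nat.b2n (same_cell p q)) grid)%nat.
    + apply lsum_le; intros q _. apply cell_pair_incidences_le.
    + rewrite lsum_mul_l. pose proof (same_cell_count_le p). lia.
  - rewrite lsum_const. unfold grid. rewrite length_prod. lia.
Qed.

Lemma energy_le : (energy <= 4 * length S * length T + 8 * nblocks * (length T * length T)
                             + 2 * (length S * length S * (r * r)))%nat.
Proof.
  unfold energy.
  rewrite (lsum_ext _ (fun t => lsum (fun t' => Nat.b2n (degenerate t t') * curve_count t t') T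
     + lsum (fun t' => Nat.b2n (negb (degenerate t t')) * curve_count t t') T)%nat).
  - rewrite lsum_add. pose proof degenerate_energy_le. pose proof nondegenerate_energy_le. lia.
  - intros t _. rewrite <- lsum_add. apply lsum_ext. intros t' _. destruct (degenerate t t'); simpl; lia.
Qed.

End Energy.

Definition line_param (a d p : point) : R :=
  ((fst p - fst a) * fst d + (snd p - snd a) * snd d) / (fst d ^ 2 + snd d ^ 2).

Lemma sq_norm_pos (d : point) : d <> (0, 0) -> 0 < fst d ^ 2 + snd d ^ 2.
Proof.
  destruct d as [x y]; simpl; intros H.
  destruct (Req_EM_T x 0), (Req_EM_T y 0); subst; [exfalso; auto| | |]; nra.
Qed.

Lemma on_line_param a d p : d <> (0, 0) -> on_line a d p ->
  p = (fst a + line_param a d p * fst d, snd a + line_param a d p * snd d).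
Proof.
  intros Hd [s ->]. pose proof (sq_norm_pos d Hd).
  replace (line_param a d _) with s; [reflexivity|]. unfold line_param; simpl. field. lra.
Qed.

Lemma NoDup_map_line_param a d s0 P : d <> (0, 0) -> NoDup P -> (forall p, In p P -> on_line a d p) ->
  NoDup (map (fun p => line_param a d p - s0) P).
Proof.
  intros Hd HP HL. apply NoDup_map_NoDup_ForallPairs; auto. intros p p' Hp Hp' E.
  rewrite (on_line_param a d p Hd (HL p Hp)), (on_line_param a d p' Hd (HL p' Hp')).
  replace (line_param a d p') with (line_param a d p) by lra. reflexivity.
Qed.

Lemma not_parallel_nonzero d1 d2 : ~ parallel d1 d2 -> d1 <> (0, 0) /\ d2 <> (0, 0).
Proof. unfold parallel. split; intros ->; simpl in H; lra. Qed.

Lemma lines_meet a1 d1 a2 d2 : ~ parallel d1 d2 -> exists s0 t0,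
  fst a1 + s0 * fst d1 = fst a2 + t0 * fst d2 /\ snd a1 + s0 * snd d1 = snd a2 + t0 * snd d2.
Proof.
  unfold parallel. intros H.
  set (det := fst d1 * snd d2 - snd d1 * fst d2) in *.
  set (wx := fst a2 - fst a1). set (wy := snd a2 - snd a1).
  exists ((wx * snd d2 - wy * fst d2) / det), ((snd d1 * wx - fst d1 * wy) / det).
  unfold wx, wy, det in *. split; field; auto.
Qed.

(** In coordinates centred at the intersection point, the squared distance is the
    binary quadratic form with the Gram matrix of [d1, d2]. *)
Lemma dist2_on_lines a1 d1 a2 d2 s0 t0 s t :
  fst a1 + s0 * fst d1 = fst a2 + t0 * fst d2 ->
  snd a1 + s0 * snd d1 = snd a2 + t0 * snd d2 ->
  let F := qform (fst d1 ^ 2 + snd d1 ^ 2) (fst d2 ^ 2 + snd d2 ^ 2)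
                 (fst d1 * fst d2 + snd d1 * snd d2) (s - s0) (t - t0) in
  dist2 (fst a1 + s * fst d1, snd a1 + s * snd d1) (fst a2 + t * fst d2, snd a2 + t * snd d2)
    = sqrt F /\ 0 <= F.
Proof.
  intros E1 E2 F. unfold F, dist2, qform; cbn [fst snd].
  replace (fst a2) with (fst a1 + s0 * fst d1 - t0 * fst d2) by lra.
  replace (snd a2) with (snd a1 + s0 * snd d1 - t0 * snd d2) by lra.
  split.
  - f_equal. ring.
  - replace (_ - _ + _) with (((s - s0) * fst d1 - (t - t0) * fst d2) ^ 2
                              + ((s - s0) * snd d1 - (t - t0) * snd d2) ^ 2) by ring.
    apply Rplus_le_le_0_compat; apply pow2_ge_0.
Qed.

Lemma distance_energy_le (A B C : R) (P1 P2 : list point) (sg tu : point -> R) :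
  (forall p q p' q', In p P1 -> In q P2 -> In p' P1 -> In q' P2 -> dist2 p q = dist2 p' q' ->
     qform A B C (sg p) (tu q) = qform A B C (sg p') (tu q')) ->
  let L := flat_map (fun p => map (dist2 p) P2) P1 in
  (lsum (fun y => mult R Req_EM_T y L) L <= energy A B C (map sg P1) (map tu P2))%nat.
Proof.
  intros H L. unfold mult, energy, curve_count, grid, on_curve, L.
  rewrite !lsum_map, lsum_flat_map.
  transitivity (lsum (fun p => lsum (fun q => lsum (fun p' => lsum (fun q' =>
     Nat.b2n (decb (Req_EM_T (qform A B C (sg p) (tu q)) (qform A B C (sg p') (tu q'))))) P2) P1) P2) P1).
  - apply lsum_le; intros p Hp. rewrite lsum_map. apply lsum_le; intros q Hq.
    rewrite lsum_flat_map. apply lsum_le; intros p' Hp'. rewrite lsum_map. apply lsum_le; intros q' Hq'.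
    unfold decb. destruct (Req_EM_T (dist2 p q) (dist2 p' q')) as [e|e]; simpl; [|lia].
    rewrite (H p q p' q' Hp Hq Hp' Hq' e). destruct Req_EM_T; simpl; [lia|congruence].
  - apply Nat.eq_le_incl.
    transitivity (lsum (fun p => lsum (fun p' => lsum (fun q => lsum (fun q' =>
      Nat.b2n (decb (Req_EM_T (qform A B C (sg p) (tu q)) (qform A B C (sg p') (tu q'))))) P2) P2) P1) P1).
    { apply lsum_ext; intros p _. apply lsum_comm. }
    rewrite lsum_comm4. apply lsum_ext; intros q _. rewrite lsum_map. apply lsum_ext; intros q' _.
    rewrite lsum_list_prod, !lsum_map. apply lsum_ext; intros p _. rewrite lsum_map. reflexivity.
Qed.

Lemma distset_energy_bound a1 d1 a2 d2 P1 P2 r :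
  ~ parallel d1 d2 -> ~ orthogonal d1 d2 -> (0 < r)%nat ->
  NoDup P1 -> (forall p, In p P1 -> on_line a1 d1 p) ->
  NoDup P2 -> (forall p, In p P2 -> on_line a2 d2 p) ->
  let n := length P1 in let m := length P2 in
  (n * m * (n * m) <= length (distset P1 P2)
     * (4 * n * m + 8 * (n / r + 1) * (m * m) + 2 * (n * n * (r * r))))%nat.
Proof.
  intros Hpar Hort Hr ND1 H1 ND2 H2 n m.
  destruct (not_parallel_nonzero _ _ Hpar) as [Hd1 Hd2].
  destruct (lines_meet a1 d1 a2 d2 Hpar) as [s0 [t0 [E1 E2]]].
  set (A := fst d1 ^ 2 + snd d1 ^ 2). set (B := fst d2 ^ 2 + snd d2 ^ 2).
  set (C := fst d1 * fst d2 + snd d1 * snd d2).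
  assert (HD : 0 < A * B - C^2).
  { replace (A * B - C^2) with ((fst d1 * snd d2 - snd d1 * fst d2)^2) by (unfold A, B, C; ring).
    unfold parallel in Hpar. nra. }
  set (sg := fun p => line_param a1 d1 p - s0). set (tu := fun q => line_param a2 d2 q - t0).
  assert (Hdist : forall p q, In p P1 -> In q P2 ->
    dist2 p q = sqrt (qform A B C (sg p) (tu q)) /\ 0 <= qform A B C (sg p) (tu q)).
  { intros p q Hp Hq. rewrite (on_line_param a1 d1 p Hd1 (H1 p Hp)) at 1.
    rewrite (on_line_param a2 d2 q Hd2 (H2 q Hq)) at 1. apply dist2_on_lines; auto. }
  assert (Henergy := distance_energy_le A B C P1 P2 sg tu).
  simpl in Henergy. set (L := flat_map (fun p => map (dist2 p) P2) P1) in *.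
  assert (Hlen : length L = (n * m)%nat).
  { rewrite <- (Nat.mul_1_l (length L)), <- lsum_const. unfold L. rewrite lsum_flat_map.
    rewrite (lsum_ext _ (fun _ => 1 * m)%nat), lsum_const; [unfold n; lia|].
    intros p _. rewrite lsum_map, lsum_const. reflexivity. }
  pose proof (sq_length_le_distinct_mul_energy R Req_EM_T L) as CS.
  rewrite Hlen in CS. eapply Nat.le_trans; [exact CS|]. apply Nat.mul_le_mono_l.
  eapply Nat.le_trans.
  - apply Henergy. intros p q p' q' Hp Hq Hp' Hq' E.
    destruct (Hdist p q Hp Hq) as [D F], (Hdist p' q' Hp' Hq') as [D' F'].
    apply sqrt_inj; auto. congruence.
  - pose proof (energy_le A B C (sq_norm_pos d1 Hd1) (sq_norm_pos d2 Hd2) Hort HD (map sg P1) (map tu P2) r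
      (NoDup_map_line_param a1 d1 s0 P1 Hd1 ND1 H1) (NoDup_map_line_param a2 d2 t0 P2 Hd2 ND2 H2) Hr)
      as Hle.
    unfold nblocks in Hle. rewrite !length_map in Hle. exact Hle.
Qed.

Lemma sq_ge_of_rpower_ge n m eps K : 0 < eps -> 0 < K -> Rpower K (1/(2*eps)) <= n ->
  Rpower n (1/2 + eps) <= m -> n * K <= m^2.
Proof.
  intros He HK Hn Hm.
  assert (Hn0 : 0 < n) by (eapply Rlt_le_trans; [apply exp_pos | exact Hn]).
  assert (Hp : 0 < Rpower n (1/2 + eps)) by apply exp_pos.
  assert (E : Rpower n (1/2 + eps) * Rpower n (1/2 + eps) = n * Rpower n (2*eps)).
  { rewrite <- Rpower_plus. replace (1/2 + eps + (1/2 + eps)) with (1 + 2*eps) by field.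
    rewrite Rpower_plus, Rpower_1; lra. }
  assert (HK2 : K <= Rpower n (2*eps)).
  { pose proof (Rle_Rpower_l (Rpower K (1/(2*eps))) n (2*eps) ltac:(lra) (conj (exp_pos _) Hn)) as H.
    rewrite Rpower_mult in H. replace (1/(2*eps) * (2*eps)) with 1 in H by (field; lra).
    rewrite Rpower_1 in H; lra. }
  nra.
Qed.

(** Multiplied by [c], the four terms of the bracket are at most [1/16], [1/4 + 1/8] and [1/16]
    of [n m^2]. *)
Lemma energy_inequality_absurd c n m r N q : 0 < c -> 32*c <= r -> 64*c <= n -> 64*c <= m ->
  32*c*r^2*n <= m^2 -> 0 <= N -> N < c*n -> 0 <= q -> q * r <= n ->
  (n*m)*(n*m) <= N * (4*n*m + 8*(q+1)*(m*m) + 2*(n*n*(r*r))) -> False.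
Proof.
  intros Hc Hr Hn Hm Hmm HN HNc Hq Hqr H.
  assert (Hr0 : 0 < r) by lra. assert (Hn0 : 0 < n) by lra. assert (Hm0 : 0 < m) by lra.
  set (Q := 4*n*m + 8*(q+1)*(m*m) + 2*(n*n*(r*r))) in *.
  assert (T1 : c * (4*n*m) <= n*m*m/16).
  { assert (64*c*m <= m*m) by (apply Rmult_le_compat_r; lra).
    assert (n*(64*c*m) <= n*(m*m)) by (apply Rmult_le_compat_l; lra). lra. }
  assert (T2 : c * q <= n / 32).
  { assert (c*q <= r/32*q) by (apply Rmult_le_compat_r; lra). lra. }
  assert (T3 : c * (8*q*(m*m)) <= n*m*m/4) by (assert (0 <= m*m) by nra; nra).
  assert (T4 : c * (8*(m*m)) <= n*m*m/8) by (assert (0 <= m*m) by nra; nra).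
  assert (T5 : c * (2*(n*n*(r*r))) <= n*m*m/16).
  { replace (c * (2*(n*n*(r*r)))) with (2*n/32 * (32*c*r^2*n)) by field.
    assert (2*n/32 * (32*c*r^2*n) <= 2*n/32 * m^2) by (apply Rmult_le_compat_l; lra).
    lra. }
  assert (TQ : c * Q <= n*m*m/2) by (unfold Q; nra).
  assert (HQ : 0 < Q) by (unfold Q; nra).
  assert (N * Q < c*n*Q) by (apply Rmult_lt_compat_r; auto).
  assert (c*n*Q <= n * (n*m*m/2)) by nra.
  assert (0 < n*m*(n*m)) by (apply Rmult_lt_0_compat; nra).
  nra.
Qed.

Lemma distset_bound_absurd c (n m N r : nat) : 0 < c -> 32 * c <= INR r -> 1 <= INR n ->
  64 * c <= INR n -> INR n * (32 * c * INR r ^ 2 + (64 * c) ^ 2) <= INR m ^ 2 ->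
  INR N < c * INR n ->
  (n * m * (n * m) <= N * (4 * n * m + 8 * (n / r + 1) * (m * m) + 2 * (n * n * (r * r))))%nat ->
  False.
Proof.
  intros Hc Hr Hn1 Hn Hm HN H.
  apply le_INR in H. repeat rewrite ?mult_INR, ?plus_INR in H.
  assert (Hq : INR (n / r) * INR r <= INR n)
    by (rewrite <- mult_INR; apply le_INR; rewrite Nat.mul_comm; apply Nat.Div0.mul_div_le).
  assert (Hm64 : 64 * c <= INR m).
  { assert (0 <= 32 * c * INR r ^ 2) by (pose proof (pow2_ge_0 (INR r)); nra).
    assert ((64 * c) ^ 2 <= INR m ^ 2) by nra.
    pose proof (pos_INR m). nra. }
  apply (energy_inequality_absurd c (INR n) (INR m) (INR r) (INR N) (INR (n / r)));
    try apply pos_INR; auto; try nra.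
  replace 4 with (INR 4) by (simpl; lra). replace 8 with (INR 8) by (simpl; lra).
  replace 2 with (INR 2) by (simpl; lra). replace 1 with (INR 1) by reflexivity. exact H.
Qed.

Theorem theorem5p2 :
  forall c eps : R, 0 < c -> 0 < eps ->
  exists n0 : nat, forall n : nat, (n > n0)%nat ->
  forall (a1 d1 a2 d2 : point), d1 <> (0, 0) -> d2 <> (0, 0) ->
  forall P1 P2 : list point,
    NoDup P1 -> length P1 = n -> (forall p, In p P1 -> on_line a1 d1 p) ->
    NoDup P2 -> INR (length P2) >= Rpower (INR n) (1/2 + eps) ->
    (forall p, In p P2 -> on_line a2 d2 p) ->
    INR (length (distset P1 P2)) < c * INR n ->
    parallel d1 d2 \/ orthogonal d1 d2.
Proof.
  intros c eps Hc He.
  destruct (INR_unbounded (32 * c)) as [r Hr].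
  set (K := 32 * c * INR r ^ 2 + (64 * c) ^ 2).
  assert (HK : 0 < K) by (pose proof (pow2_ge_0 (INR r)); unfold K; nra).
  destruct (INR_unbounded (Rmax (Rmax (64 * c) 1) (Rpower K (1 / (2 * eps))))) as [n0 Hn0].
  exists n0. intros n Hn a1 d1 a2 d2 _ _ P1 P2 ND1 Hlen H1 ND2 Hm H2 HD.
  assert (Hbig : Rmax (Rmax (64 * c) 1) (Rpower K (1 / (2 * eps))) < INR n)
    by (apply lt_INR in Hn; lra).
  apply Rmax_Rlt in Hbig as [Hn64 HnK]. apply Rmax_Rlt in Hn64 as [Hn64 Hn1].
  unfold parallel, orthogonal.
  destruct (Req_EM_T (fst d1 * snd d2 - snd d1 * fst d2) 0) as [|Hpar]; [left; assumption|].
  destruct (Req_EM_T (fst d1 * fst d2 + snd d1 * snd d2) 0) as [|Hort]; [right; assumption|].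
  exfalso.
  apply (distset_bound_absurd c n (length P2) (length (distset P1 P2)) r); try lra.
  - apply sq_ge_of_rpower_ge with eps; fold K; lra.
  - rewrite <- Hlen. apply (distset_energy_bound a1 d1 a2 d2); auto. apply INR_lt. simpl. lra.
Qed.
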